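(* Let $\gamma > 1.755$ and let $I$ be a $\gamma$-stable instance of the metric Steiner tree problem with optimal Steiner tree $\mathrm{OPT}$, such that no two Steiner points are adjacent in $\mathrm{OPT}$. Let $H$ be a subgraph of $\mathrm{OPT}$. Suppose $T(a, \bar b)$, with $\bar b = (b_1, \ldots, b_m)$, is a terminal component fan relative to $H$ such that: (i) the average weight of $T(a, \bar b)$ is less than the weight of every edge not in $H$ that connects two distinct terminal components of $H$; (ii) the average weight of $T(a, \bar b)$ is minimal among the average weights of all terminal component fans relative to $H$; (iii) the edges of $T(a, \bar b)$ are all within a factor of $\frac{1}{\gamma - 1}$ of each other, i.e. $w_{ab_i} \le \frac{1}{\gamma - 1} w_{ab_j}$ for all $i, j$. Then $T(a, \bar b)$ is a subgraph of $\mathrm{OPT}$, i.e. $ab_i$ is an edge of $\mathrm{OPT}$ for every $i$.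
   Context: An instance of the metric Steiner tree problem consists of a finite set $V$ of points of a metric space with metric $d$, a set $T \subseteq V$ of terminals, and the complete graph on $V$ with edge weights $w_{uv} = d(u,v)$. Points of $V \setminus T$ are Steiner points. A Steiner tree is a tree in this complete graph whose vertex set contains all of $T$; its weight is the sum of its edge weights. For $\gamma > 1$, the instance is $\gamma$-stable if it has a minimum-weight Steiner tree $\mathrm{OPT}$ such that for every $w' : V \times V \to \mathbb{R}_{\ge 0}$ with $w_{uv} \le w'_{uv} \le \gamma w_{uv}$ for all $u,v$, every minimum-weight Steiner tree with respect to $w'$ equals $\mathrm{OPT}$. For vertices $a$ and $\bar b = (b_1, \ldots, b_m)$ with $m \ge 2$, $T(a, \bar b)$ denotes the star on vertex set $\{a, b_1, \ldots, b_m\}$ with edges $ab_1, \ldots, ab_m$; its average weight is $\frac{\sum_{i=1}^m w_{ab_i}}{m - 1}$. For a subgraph $H$ of $\mathrm{OPT}$, the terminal components of $H$ are the connected components of $H$ together with the terminals not in $V(H)$ (each as a singleton). $T(a, \bar b)$ is a terminal component fan relative to $H$ if $a$ is a Steiner point and each $b_i$ is either a terminal or a vertex of a connected component of $H$ having at least two vertices, with the $b_i$ lying in pairwise distinct terminal components of $H$. *)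

From HB Require Import structures.
From mathcomp Require Import all_boot all_order all_algebra.
Set Implicit Arguments. Unset Strict Implicit. Unset Printing Implicit Defensive.
Import Order.TTheory GRing.Theory Num.Theory.
Local Open Scope ring_scope.

(* Graphs on a finite vertex type V: a vertex set S and an edge set F whose
   elements are unordered pairs [set u; v] with u != v. *)

Definition edge_rel (V : finType) (F : {set {set V}}) : rel V :=
  fun u v => [set u; v] \in F.

Definition is_tree (V : finType) (S : {set V}) (F : {set {set V}}) : Prop :=
  [/\ S != set0,
      (forall e, e \in F -> exists u v, [/\ u != v, u \in S, v \in S & e = [set u; v]]),
      (forall u v, u \in S -> v \in S -> connect (edge_rel F) u v)
    & #|F| = (#|S| - 1)%N].

Definition steiner_tree (V : finType) (T S : {set V}) (F : {set {set V}}) : Prop :=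
  is_tree S F /\ T \subset S.

(* Weight of an edge set w.r.t. w : V -> V -> R; each unordered edge {u,v}
   is counted through both ordered pairs, so the weight of edge uv is
   (w u v + w v u)/2 (= w u v when w is symmetric). *)
Definition tree_weight (R : realFieldType) (V : finType) (w : V -> V -> R)
  (F : {set {set V}}) : R :=
  (\sum_(p : V * V | [set p.1; p.2] \in F) w p.1 p.2) / 2%:R.

Definition min_steiner_tree (R : realFieldType) (V : finType) (T : {set V})
  (w : V -> V -> R) (S : {set V}) (F : {set {set V}}) : Prop :=
  steiner_tree T S F /\
  forall S' F', steiner_tree T S' F' -> tree_weight w F <= tree_weight w F'.

Definition is_metric (R : realFieldType) (V : finType) (d : V -> V -> R) : Prop :=
  forall x y z, [/\ 0 <= d x y, d x y = 0 <-> x = y, d x y = d y x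
                  & d x z <= d x y + d y z].

Definition gamma_stable (R : realFieldType) (V : finType) (d : V -> V -> R)
  (T : {set V}) (gamma : R) (S : {set V}) (F : {set {set V}}) : Prop :=
  min_steiner_tree T d S F /\
  forall w' : V -> V -> R,
    (forall u v, d u v <= w' u v <= gamma * d u v) ->
    forall S' F', min_steiner_tree T w' S' F' -> S' = S /\ F' = F.

Definition is_subgraph (V : finType) (SH : {set V}) (FH : {set {set V}})
  (S : {set V}) (F : {set {set V}}) : Prop :=
  [/\ SH \subset S, FH \subset F &
      forall u v, [set u; v] \in FH -> u \in SH /\ v \in SH].

Definition in_nontrivial_comp (V : finType) (SH : {set V}) (FH : {set {set V}})
  (x : V) : Prop :=
  x \in SH /\ exists y, y != x /\ connect (edge_rel FH) x y.

(* x belongs to some terminal component of H. *)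
Definition in_terminal_comp (V : finType) (T SH : {set V}) (x : V) : Prop :=
  x \in SH \/ x \in T.

(* Two vertices lying in terminal components lie in the same terminal
   component iff they are connected in H (reflexive). *)
Definition same_terminal_comp (V : finType) (FH : {set {set V}}) (x y : V) : bool :=
  connect (edge_rel FH) x y.

Definition tc_fan (V : finType) (T SH : {set V}) (FH : {set {set V}})
  (a : V) (m : nat) (b : 'I_m -> V) : Prop :=
  [/\ (2 <= m)%N, a \notin T,
      (forall i, b i != a),
      (forall i, b i \in T \/ in_nontrivial_comp SH FH (b i))
    & forall i j, i != j -> ~~ same_terminal_comp FH (b i) (b j)].

Definition avg_weight (R : realFieldType) (V : finType) (d : V -> V -> R)
  (a : V) (m : nat) (b : 'I_m -> V) : R :=
  (\sum_(i < m) d a (b i)) / (m.-1)%:R.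

(* Write S and F for the vertices and edges of OPT and A for the average weight of the fan.
   Stability makes every exchange strict: if removing the edges D of OPT and adding D' gives
   another Steiner tree, then gamma w(D) < w(D').

   If a is a vertex of OPT and a b_i is not an edge, swap a b_i for the first edge a u of the
   path from a to b_i: gamma d(a,u) < d(a,b_i). The vertex u is a terminal, and using u in the
   fan (in place of the leaf of its component, or as an extra leaf) shows by minimality of A and
   by (iii) that (gamma - 1) d(a,b_i) <= d(a,u); so gamma (gamma - 1) < 1, which fails above the
   golden ratio.

   If a is not in OPT, call an edge of OPT outside H light when its weight is below A / gamma.
   By (i) a light edge has an end s that is a Steiner point outside H. Such an s has at least
   three neighbours, all terminals; two light edges at s, the fan of three neighbours of s and a
   swap of the third edge would give 2 gamma (gamma - 1) < 2 gamma - 1, false for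
   gamma > 1 + 1/sqrt 2. So light edges are pendant and, together with H, keep the leaves b_i
   in distinct components; a maximal forest of OPT containing them with this property omits
   exactly m - 1 edges, none light. Trading those edges for the fan gives a Steiner tree on
   S + a, and stability yields
   (m - 1) A < sum_i d(a,b_i) = (m - 1) A. *)

From HB Require Import structures.
From mathcomp Require Import all_boot all_order all_algebra.
From Stdlib Require Import Classical.
From mathcomp Require Import ring lra zify.
Import Order.TTheory GRing.Theory Num.Theory.
Local Open Scope ring_scope.
Set Implicit Arguments. Unset Strict Implicit.

Section Connectivity.

Variable V : finType.
Implicit Types (x y u v p q s t : V) (e : {set V}) (B S : {set V})
  (E F K L : {set {set V}}).

Lemma edge_relC F : symmetric (edge_rel F).
Proof. by move=> u v; rewrite /edge_rel setUC. Qed.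

Lemma connect_edgeC F : connect_sym (edge_rel F).
Proof. exact/sym_connect_sym/edge_relC. Qed.

Lemma connect_edge F u v : [set u; v] \in F -> connect (edge_rel F) u v.
Proof. exact: connect1. Qed.

Lemma connect_forward (r : rel V) (P : pred V) x y :
  P x -> (forall u v, P u -> r u v -> P v) -> connect r x y -> P y.
Proof.
move=> Px Pr /connectP [w]; elim: w x Px => [|z w IH] x Px /=; first by move=> _ ->.
by case/andP=> rxz; apply: IH (Pr _ _ Px rxz).
Qed.

Lemma connect_exit (r : rel V) (P : pred V) x y :
  connect r x y -> P x -> ~~ P y -> exists u v, [/\ r u v, P u & ~~ P v].
Proof.
move=> /connectP [w]; elim: w x => [|z w IH] x /=; first by move=> _ -> ->.
case/andP=> rxz pz ey Px nPy; case Pz: (P z); first exact: IH pz ey Pz nPy.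
by exists x, z; rewrite Pz.
Qed.

Lemma connect_set0 x y : connect (edge_rel (set0 : {set {set V}})) x y -> x = y.
Proof.
move=> cxy; apply/esym/eqP; apply: (connect_forward (P := pred1 x) (eqxx x) _ cxy).
by move=> u v _; rewrite /edge_rel inE.
Qed.

Lemma connect_subset K K' x y :
  K \subset K' -> connect (edge_rel K) x y -> connect (edge_rel K') x y.
Proof. by move=> /subsetP sKK'; apply: connect_sub => u v /sKK' /connect_edge. Qed.

Lemma connect_map F F' (f : V -> V) x y :
  (forall u v, [set u; v] \in F -> connect (edge_rel F') (f u) (f v)) ->
  connect (edge_rel F) x y -> connect (edge_rel F') (f x) (f y).
Proof.
move=> Hf; apply: (connect_forward (P := fun z => connect _ (f x) (f z))) => //.
by move=> u v cu /Hf; apply: connect_trans.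
Qed.

Lemma set2_eq u v p q :
  [set u; v] = [set p; q] -> (u = p /\ v = q) \/ (u = q /\ v = p).
Proof.
move=> E.
have /set2P[] : u \in [set p; q] by rewrite -E set21.
all: have /set2P[] : v \in [set p; q] by rewrite -E set22.
all: have /set2P[] : p \in [set u; v] by rewrite E set21.
all: have /set2P[] : q \in [set u; v] by rewrite E set22.
all: by move=> *; subst; first [by left | by right].
Qed.

Lemma set2_injr s t t' : [set s; t] = [set s; t'] -> t = t'.
Proof. by case/set2_eq => [[_ ->] | [-> ->]]. Qed.

Lemma connect_setU1 K e x y :
  connect (edge_rel (e |: K)) x y ->
  connect (edge_rel K) x y \/
  (exists2 w, w \in e & connect (edge_rel K) x w) /\
  (exists2 w, w \in e & connect (edge_rel K) y w).
Proof.
have reach z z' : connect (edge_rel (e |: K)) z z' ->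
    connect (edge_rel K) z z' \/ exists2 w, w \in e & connect (edge_rel K) z w.
  pose P := [pred v | connect (edge_rel K) z v || [exists w in e, connect (edge_rel K) z w]].
  move=> czz'; have /orP [|/exists_inP [w]] : P z'; [|by left|by right; exists w].
  apply: (connect_forward _ _ czz'); first by rewrite /= connect0.
  move=> u v /= /orP [czu|->]; last by rewrite orbT.
  rewrite /edge_rel in_setU1 => /orP [/eqP E|uvK].
    by apply/orP; right; apply/exists_inP; exists u; rewrite -?E ?set21.
  by rewrite (connect_trans czu (connect_edge uvK)).
move=> cxy; case: (reach x y cxy) => [|ex]; first by left.
rewrite connect_edgeC in cxy.
by case: (reach y x cxy) => [|ey]; [left; rewrite connect_edgeC | right].
Qed.

Definition pair_set E := forall e, e \in E -> exists p q, e = [set p; q].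

Lemma card_connected_by_le B K E : pair_set E ->
  {in B &, forall x y, x != y -> ~~ connect (edge_rel K) x y} ->
  {in B &, forall x y, connect (edge_rel (K :|: E)) x y} ->
  (#|B| <= #|E|.+1)%N.
Proof.
move cE : #|E| => n; elim: n E K B cE => [|n IH] E K B cE pE sepB connB.
  rewrite (cards0_eq cE) setU0 in connB.
  apply/card_le1_eqP => x y xB yB; apply/eqP; rewrite eq_sym.
  by apply: contraTT (connB x y xB yB); apply: sepB.
have /set0Pn [r rE] : E != set0 by rewrite -card_gt0 cE.
have [p [q rpq]] := pE r rE.
(* The edge r can only merge the components of p and q: drop from B the vertex joined to q. *)
pose C := [set x | connect (edge_rel K) x q]; pose B' := B :\: C.
have cardB : (#|B| <= #|B'|.+1)%N.
  rewrite -(cardsID C B) addnC -addn1 leq_add2l.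
  apply/card_le1_eqP => x y /setIP [xB]; rewrite inE => cxq /setIP [yB]; rewrite inE => cyq.
  apply/eqP; rewrite eq_sym; apply: contraTT (connect_trans cxq _ : connect _ x y).
    exact: sepB.
  by rewrite connect_edgeC.
apply: (leq_trans cardB); rewrite ltnS.
apply: (IH (E :\ r) (r |: K)).
- by move: cE; rewrite (cardsD1 r E) rE add1n => -[].
- by move=> e /setD1P [_ /pE].
- move=> x y /setDP [xB]; rewrite inE => nxq /setDP [yB]; rewrite inE => nyq xy; apply/negP.
  case/connect_setU1 => [|[[w1 w1r cx] [w2 w2r cy]]]; first exact/negP/sepB.
  have to_p w z : w \in r -> connect (edge_rel K) z w ->
      ~~ connect (edge_rel K) z q -> connect (edge_rel K) z p.
    by rewrite rpq => /set2P [->|->] // ->.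
  have cxp := to_p _ _ w1r cx nxq; have cyp := to_p _ _ w2r cy nyq.
  by apply/negP: (sepB x y xB yB xy); rewrite (connect_trans cxp) // connect_edgeC.
- move=> x y /setDP [xB _] /setDP [yB _].
  by rewrite setUAC setD1K // setUC; exact: connB.
Qed.

Lemma card_connected_le B E : pair_set E ->
  {in B &, forall x y, connect (edge_rel E) x y} -> (#|B| <= #|E|.+1)%N.
Proof.
move=> pE connB; apply: (@card_connected_by_le B set0) => //.
  by move=> x y _ _; apply: contra_neqN => /connect_set0.
by move=> x y xB yB; rewrite set0U; apply: connB.
Qed.

Lemma tree_pair_set S F : is_tree S F -> pair_set F.
Proof. by case=> _ edgF _ _ e /edgF [u [v [_ _ _ ->]]]; exists u, v. Qed.

Lemma tree_edge_ends S F u v :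
  is_tree S F -> [set u; v] \in F -> [/\ u != v, u \in S & v \in S].
Proof.
case=> _ edgF _ _ /edgF [x [y [xy xS yS /set2_eq [[-> ->] | [-> ->]]]]] //.
by rewrite eq_sym.
Qed.

Lemma tree_edge_at S F e s :
  is_tree S F -> e \in F -> s \in e -> exists t, e = [set s; t].
Proof.
case=> _ edgF _ _ /edgF [x [y [_ _ _ ->]]] /set2P [->|->]; first by exists y.
by exists x; rewrite setUC.
Qed.

Lemma tree_bridge S F p q :
  is_tree S F -> [set p; q] \in F -> ~~ connect (edge_rel (F :\ [set p; q])) p q.
Proof.
move=> trF pqF; have pF := tree_pair_set trF; case: trF => /set0Pn [s0 s0S] _ connS cardF.
apply/negP => cpq.
have : (#|S| <= (#|F :\ [set p; q]|).+1)%N.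
  apply: card_connected_le => [e /setD1P [_ /pF] //|x y xS yS].
  apply: connect_sub (connS x y xS yS) => u v uvF.
  have [E|ne] := eqVneq [set u; v] [set p; q].
    by case: (set2_eq E) => [[-> ->] | [-> ->]]; rewrite // connect_edgeC.
  by apply: connect_edge; rewrite in_setD1 ne; exact: uvF.
have := cardsD1 [set p; q] F; rewrite pqF add1n cardF.
have : (0 < #|S|)%N by apply/card_gt0P; exists s0.
set X := #|F :\ [set p; q]|; set n := #|S|; lia.
Qed.

Lemma tree_exchange S F x y p q :
  is_tree S F -> [set x; y] \in F -> [set p; q] \notin F ->
  p \in S -> q \in S -> p != q ->
  connect (edge_rel ([set p; q] |: (F :\ [set x; y]))) x y ->
  is_tree S ([set p; q] |: (F :\ [set x; y])).
Proof.
move=> [S0 edgF connS cardF] xyF pqF pS qS pq cxy; split => //.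
- move=> e; rewrite in_setU1 => /orP [/eqP -> | /setD1P [_ /edgF] //].
  by exists p, q.
- move=> u v uS vS; apply: connect_sub (connS u v uS vS) => u' v' uvF.
  have [/set2_eq [[-> ->] | [-> ->]] // | ne] := eqVneq [set u'; v'] [set x; y].
    by rewrite connect_edgeC.
  by apply: connect_edge; rewrite in_setU1 in_setD1 ne; apply/orP; right; exact: uvF.
- by rewrite cardsU1 in_setD1 (negbTE pqF) andbF -cardF (cardsD1 [set x; y] F) xyF.
Qed.

Lemma tree_neighbour_towards S F a x :
  is_tree S F -> a \in S -> x \in S -> x != a ->
  exists u, [set a; u] \in F /\ connect (edge_rel [set e in F | a \notin e]) x u.
Proof.
move=> [_ _ connS _] aS xS xa; set Fa := [set e in F | a \notin e].
have nxa : ~~ connect (edge_rel Fa) x a.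
  apply/negP => cxa; suff : a != a by rewrite eqxx.
  apply: (connect_forward (P := predC1 a) xa _ cxa) => u v /= ua.
  by rewrite /edge_rel inE => /andP [_]; apply: contraNneq => ->; rewrite set22.
have [p [q [pqF cxp ncxq]]] :=
  connect_exit (P := connect (edge_rel Fa) x) (connS x a xS aS) (connect0 _ _) nxa.
have : a \in [set p; q].
  apply: contraNT ncxq => anpq; rewrite (connect_trans cxp) //.
  by apply: connect_edge; rewrite inE anpq andbT; exact: pqF.
by case/set2P => E; subst a; [rewrite cxp in nxa | exists p; rewrite setUC].
Qed.

Lemma connect_pendant_edges K L x y :
  (forall e, e \in L -> exists s t, [/\ e = [set s; t], s != x, s != y &
     forall e', e' \in K :|: L -> s \in e' -> e' = e]) ->
  connect (edge_rel (K :|: L)) x y -> connect (edge_rel K) x y.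
Proof.
move cL : #|L| => n; elim: n L cL => [|n IH] L cL pendL; first by rewrite (cards0_eq cL) setU0.
have /set0Pn [e eL] : L != set0 by rewrite -card_gt0 cL.
have [s [t [est sx sy pend_s]]] := pendL e eL.
have subKL : K :|: (L :\ e) \subset K :|: L by rewrite setUS // subD1set.
move=> cxy; apply: (IH (L :\ e)).
- by move: cL; rewrite (cardsD1 e L) eL add1n => -[].
- move=> e1 /setD1P [_ /pendL [s1 [t1 [-> s1x s1y pend1]]]].
  by exists s1, t1; split => // e' /(subsetP subKL); apply: pend1.
have [eK|eK] := boolP (e \in K).
  suff -> : K :|: (L :\ e) = K :|: L by [].
  by apply/setP => f; rewrite !inE; case: eqVneq => // ->; rewrite eK.
rewrite -(setD1K eL) setUCA in cxy.
case: (connect_setU1 cxy) => // [[[w1 w1e cxw] [w2 w2e cyw]]].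
have isolated_s z : connect (edge_rel (K :|: (L :\ e))) s z -> z = s.
  move=> csz; apply/eqP; apply: (connect_forward (P := pred1 s) (eqxx s) _ csz).
  move=> u v /eqP -> svKL; have E := pend_s _ (subsetP subKL _ svKL) (set21 _ _).
  by move: svKL; rewrite /edge_rel E in_setU in_setD1 eqxx (negbTE eK).
have to_t z w : w \in e -> z != s -> connect (edge_rel (K :|: (L :\ e))) z w ->
    connect (edge_rel (K :|: (L :\ e))) z t.
  rewrite {1}est => /set2P [->|-> //] zs; rewrite connect_edgeC => /(isolated_s z) E.
  by rewrite E eqxx in zs.
rewrite eq_sym in sx; rewrite eq_sym in sy.
by rewrite (connect_trans (to_t _ _ w1e sx cxw)) // connect_edgeC (to_t _ _ w2e sy cyw).
Qed.

Lemma tree_triangle_free S F s t t' :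
  is_tree S F -> [set s; t] \in F -> [set s; t'] \in F -> t != t' -> [set t; t'] \notin F.
Proof.
move=> trF stF st'F tt'; have [st _ _] := tree_edge_ends trF stF.
have [st' _ _] := tree_edge_ends trF st'F.
apply/negP => tt'F; apply: (negP (tree_bridge trF stF)).
apply: (@connect_trans _ _ t'); apply: connect_edge; rewrite in_setD1.
  by rewrite st'F andbT; apply: contra_neq tt' => /set2_injr.
rewrite setUC tt'F andbT; apply/eqP => /set2_eq [[ts _] | [_ t's]].
  by rewrite ts eqxx in st.
by rewrite t's eqxx in st'.
Qed.

Lemma tree_splice S F s t t' :
  is_tree S F -> [set s; t] \in F -> [set s; t'] \in F -> t != t' ->
  (forall z, [set s; z] \in F -> z = t \/ z = t') ->
  is_tree (S :\ s) ([set t; t'] |: (F :\ [set s; t] :\ [set s; t'])).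
Proof.
move=> trF stF st'F tt' nbs; have [_ edgF connS cardF] := trF.
have [st sS tS] := tree_edge_ends trF stF; have [st' _ t'S] := tree_edge_ends trF st'F.
have stt' : [set s; t] != [set s; t'] by apply: contra_neq tt' => /set2_injr.
have tt'F := tree_triangle_free trF stF st'F tt'.
set F' := F :\ [set s; t] :\ [set s; t'].
have sF' e : e \in F' -> s \notin e.
  move=> /setD1P [ne1 /setD1P [ne2 eF]]; apply/negP => /(tree_edge_at trF eF) [z Ez].
  by case: (nbs z); rewrite -?Ez // => Ez'; rewrite Ez Ez' eqxx in ne1 ne2.
split.
- by apply/set0Pn; exists t; rewrite in_setD1 eq_sym st tS.
- move=> e; rewrite in_setU1 => /orP [/eqP -> | eF'].
    by exists t, t'; rewrite !in_setD1 tS t'S !andbT ![_ == s]eq_sym st st'.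
  have := sF' _ eF'; move: eF' => /setD1P [_ /setD1P [_ /edgF [x [y [xy xS yS ->]]]]].
  rewrite !inE negb_or => /andP [sx sy].
  by exists x, y; rewrite !in_setD1 xS yS ![_ == s]eq_sym sx sy.
- move=> u v /setD1P [us uS] /setD1P [vs vS].
  pose f z := if z == s then t else z.
  have f_id z : z != s -> f z = z by move=> zs; rewrite /f (negbTE zs).
  have f_s : f s = t by rewrite /f eqxx.
  rewrite -(f_id u us) -(f_id v vs).
  apply: (connect_map _ (connS u v uS vS)) => x y xyF.
  have reach_t z : [set s; z] \in F -> connect (edge_rel ([set t; t'] |: F')) t (f z).
    have ts : t != s by rewrite eq_sym.
    have t's : t' != s by rewrite eq_sym.
    by case/nbs=> ->; rewrite f_id // ?connect0 //; apply: connect_edge; rewrite setU11.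
  have [xs | xs] := eqVneq x s; first by subst x; rewrite f_s; apply: reach_t.
  have [ys | ys] := eqVneq y s.
    by subst y; rewrite f_s connect_edgeC; apply: reach_t; rewrite setUC.
  have ne z : [set x; y] != [set s; z].
    by apply/eqP => /set2_eq [[E _] | [_ E]]; [rewrite E eqxx in xs | rewrite E eqxx in ys].
  by rewrite !f_id //; apply: connect_edge; rewrite in_setU1 !in_setD1 !ne xyF orbT.
- have := cardsD1 [set s; t] F; have := cardsD1 [set s; t'] (F :\ [set s; t]).
  have := cardsD1 s S; rewrite cardsU1 !in_setD1 (negbTE tt'F) !andbF eq_sym stt' stF st'F sS.
  rewrite -/F' cardF /= => -> ->; set k := #|F'|; set j := #|S :\ s|; lia.
Qed.

Lemma subgraph_separates_neighbours S F SH FH s x y :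
  is_tree S F -> is_subgraph SH FH S F -> s \notin SH ->
  [set s; x] \in F -> [set s; y] \in F -> x != y -> ~~ connect (edge_rel FH) x y.
Proof.
move=> trF [_ FHF FHSH] sSH sxF syF xy; apply/negP => cxy.
have FH_sx : FH \subset F :\ [set s; x].
  apply/subsetP => e eFH; rewrite in_setD1 (subsetP FHF) // andbT.
  by apply: contraNneq sSH => Ee; rewrite Ee in eFH; case: (FHSH _ _ eFH).
apply: (negP (tree_bridge trF sxF)); apply: (@connect_trans _ _ y).
  by apply: connect_edge; rewrite in_setD1 syF andbT; apply: contra_neq xy => /set2_injr.
by rewrite connect_edgeC (connect_subset FH_sx).
Qed.

Lemma separating_forest S F K0 B :
  is_tree S F -> K0 \subset F -> B \subset S -> B != set0 ->
  {in B &, forall x y, x != y -> ~~ connect (edge_rel K0) x y} ->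
  exists K, [/\ K0 \subset K, K \subset F,
    {in B &, forall x y, x != y -> ~~ connect (edge_rel K) x y} &
    forall v, v \in S -> exists2 x, x \in B & connect (edge_rel K) v x].
Proof.
move=> [_ _ connS _] K0F BS /set0Pn [x0 x0B] sepK0.
pose sep K := [forall x in B, forall y in B, (x != y) ==> ~~ connect (edge_rel K) x y].
have sepP K : reflect {in B &, forall x y, x != y -> ~~ connect (edge_rel K) x y} (sep K).
  apply: (iffP forall_inP) => [sepK x y xB yB | sepK x xB].
    by move/forall_inP: (sepK x xB) => /(_ y yB) /implyP.
  by apply/forall_inP => y yB; apply/implyP; apply: sepK.
pose P K := [&& K0 \subset K, K \subset F & sep K].
have PK0 : P K0 by rewrite /P subxx K0F; apply/sepP.
case: (arg_maxnP (fun K => #|K|) PK0) => K /and3P [K0K KF /sepP sepK] maxK.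
exists K; split => // v vS.
have [/exists_inP [x xB cvx] | nov] := boolP [exists x in B, connect (edge_rel K) v x].
  by exists x.
have nvB x : x \in B -> ~~ connect (edge_rel K) v x.
  by move=> xB; apply: contra nov => cvx; apply/exists_inP; exists x.
have [p [q [pqF cvp ncvq]]] := connect_exit (P := connect (edge_rel K) v)
  (connS v x0 vS (subsetP BS _ x0B)) (connect0 _ _) (nvB _ x0B).
have pqK : [set p; q] \notin K.
  by apply: contra ncvq => pqK; rewrite (connect_trans cvp) // connect_edge.
suff : P ([set p; q] |: K) by move/maxK; rewrite cardsU1 pqK /= ltnn.
rewrite /P (subset_trans K0K (subsetU1 _ _)) subUset sub1set KF andbT /=.
apply/andP; split; first exact: pqF.
apply/sepP => x y xB yB xy; apply/negP.
case/connect_setU1 => [|[[w1 w1pq cxw] [w2 w2pq cyw]]]; first exact/negP/sepK.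
have to_q z w : z \in B -> w \in [set p; q] -> connect (edge_rel K) z w ->
    connect (edge_rel K) z q.
  move=> zB /set2P [->|-> //] czp; have := nvB z zB.
  by rewrite (connect_trans cvp) // connect_edgeC.
apply: (negP (sepK x y xB yB xy)).
by rewrite (connect_trans (to_q _ _ xB w1pq cxw)) // connect_edgeC (to_q _ _ yB w2pq cyw).
Qed.

Lemma tree_reattach S F K B a :
  is_tree S F -> a \notin S -> K \subset F -> B \subset S ->
  {in B &, forall x y, x != y -> ~~ connect (edge_rel K) x y} ->
  (forall v, v \in S -> exists2 x, x \in B & connect (edge_rel K) v x) ->
  #|F :\: K|.+1 = #|B| /\ is_tree (a |: S) (K :|: [set [set a; x] | x in B]).
Proof.
move=> trF aS KF BS sepK reachB; have [/set0Pn [s0 s0S] edgF connS cardF] := trF.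
set fan := [set [set a; x] | x in B].
have cfan : #|fan| = #|B| by rewrite card_in_imset // => x y _ _ /set2_injr.
have Kfan : K :&: fan = set0.
  apply/setP => e; rewrite !inE; apply/negP => /andP [/(subsetP KF) eF /imsetP [x _ Ee]].
  rewrite Ee in eF; have [_ aS' _] := tree_edge_ends trF eF.
  by rewrite aS' in aS.
have a_reach u : u \in a |: S -> connect (edge_rel (K :|: fan)) u a.
  case/setU1P => [-> | uS]; first exact: connect0.
  have [x xB cux] := reachB u uS.
  rewrite (connect_trans (connect_subset (subsetUl _ _) cux)) // connect_edge //.
  by rewrite setUC inE; apply/orP; right; apply/imsetP; exists x.
have pfan : pair_set (K :|: fan).
  move=> e /setUP [/(subsetP KF) /(tree_pair_set trF) // | /imsetP [x _ ->]].
  by exists a, x.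
have le_B : (#|B| <= #|F :\: K|.+1)%N.
  apply: card_connected_by_le sepK _ => [e /setDP [/(tree_pair_set trF)] //|x y xB yB].
  by rewrite -{1}(setIidPr KF) setID; apply: connS; apply: (subsetP BS).
have le_S : (#|a |: S| <= #|K :|: fan|.+1)%N.
  apply: card_connected_le pfan _ => u v uS vS.
  by rewrite (connect_trans (a_reach u uS)) // connect_edgeC a_reach.
have cKfan : #|K :|: fan| = (#|K| + #|B|)%N by rewrite cardsU Kfan cards0 subn0 cfan.
have cFK : #|F :\: K| = (#|F| - #|K|)%N by rewrite cardsDS.
have leKF : (#|K| <= #|F|)%N := subset_leq_card KF.
have S0 : (0 < #|S|)%N by apply/card_gt0P; exists s0.
have [cardB cardKfan] : #|F :\: K|.+1 = #|B| /\ #|K :|: fan| = (#|a |: S| - 1)%N.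
  move: le_B le_S leKF S0; rewrite cFK cKfan cardsU1 aS cardF.
  set nB := #|B|; set nK := #|K|; set nS := #|S|; lia.
split => //; split => //.
- by apply/set0Pn; exists a; rewrite setU11.
- move=> e /setUP [/(subsetP KF) /edgF [x [y [xy xS yS ->]]] | /imsetP [x xB ->]].
    by exists x, y; rewrite !inE xS yS !orbT.
  exists a, x; rewrite setU11 inE (subsetP BS _ xB) orbT; split => //.
  by apply: contraNneq aS => ->; apply: (subsetP BS).
- move=> u v uS vS.
  by rewrite (connect_trans (a_reach u uS)) // connect_edgeC a_reach.
Qed.

End Connectivity.

Lemma exists_minimizer (R : realFieldType) (X : finType) (P : X -> Prop) (f : X -> R) x0 :
  P x0 -> exists2 x, P x & forall y, P y -> f x <= f y.
Proof.
move: {2}_.+1 (ltnSn #|[pred y | f y < f x0]|) => n.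
elim: n x0 => // n IH x0 lt_n Px0.
have [[y Py lt_yx0] | no_lower] := classic (exists2 y, P y & f y < f x0); last first.
  by exists x0 => // y Py; rewrite leNgt; apply/negP => lt_y; apply: no_lower; exists y.
apply: (IH y) => //; rewrite -ltnS (leq_trans _ lt_n) // ltnS.
apply: proper_card; apply/properP; split.
  by apply/subsetP => z; rewrite !inE => /lt_trans; apply.
by exists y; rewrite !inE ?ltxx.
Qed.

Section Weights.

Variables (R : realFieldType) (V : finType).
Implicit Types (w : V -> V -> R) (e : {set V}) (E F : {set {set V}}).

Definition edge_weight w e : R :=
  (\sum_(p : V * V | [set p.1; p.2] == e) w p.1 p.2) / 2%:R.

Definition edges_weight w E : R := \sum_(e in E) edge_weight w e.

Lemma tree_weightE w F : tree_weight w F = edges_weight w F.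
Proof.
rewrite /tree_weight /edges_weight /edge_weight mulr_suml.
rewrite (partition_big (fun p : V * V => [set p.1; p.2]) (mem F)) //=.
apply: eq_bigr => e eF; rewrite mulr_suml; apply: eq_bigl => p.
by case: eqP => [-> | _]; rewrite ?eF ?andbF.
Qed.

Lemma edges_weight1 w e : edges_weight w [set e] = edge_weight w e.
Proof. by rewrite /edges_weight big_set1. Qed.

Lemma edges_weight2 w e1 e2 : e1 != e2 ->
  edges_weight w [set e1; e2] = edge_weight w e1 + edge_weight w e2.
Proof. by move=> ne; rewrite /edges_weight big_setU1 ?big_set1 // in_set1. Qed.

Lemma edge_weight_set2 w x y : (forall u v, w u v = w v u) -> x != y ->
  edge_weight w [set x; y] = w x y.
Proof.
move=> wC xy; rewrite /edge_weight (bigD1 (x, y)) //= (bigD1 (y, x)) /=; last first.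
  by rewrite setUC eqxx xpair_eqE eq_sym (negbTE xy).
rewrite big1 ?addr0 => [|[u v] /= /andP [/andP [/eqP E uvxy] uvyx]].
  by rewrite (wC y x); field.
by case: (set2_eq E) => [] [? ?]; subst; rewrite eqxx in uvxy uvyx.
Qed.

End Weights.

Section Metric.

Variables (R : realFieldType) (V : finType) (d : V -> V -> R).
Hypothesis d_metric : is_metric d.

Lemma dist_ge0 x y : 0 <= d x y.
Proof. by case: (d_metric x y x). Qed.

Lemma distC x y : d x y = d y x.
Proof. by case: (d_metric x y x). Qed.

Lemma dist_triangle x y z : d x z <= d x y + d y z.
Proof. by case: (d_metric x y z). Qed.

Lemma dist_gt0 x y : x != y -> 0 < d x y.
Proof.
move=> xy; case: (d_metric x y x) => d0 [d0_eq _] _ _; rewrite lt_def d0 andbT.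
by apply: contra_neq xy => /d0_eq.
Qed.

Lemma edge_weight_dist x y : x != y -> edge_weight d [set x; y] = d x y.
Proof. exact/edge_weight_set2/distC. Qed.

End Metric.

Section Stability.

Variables (R : realFieldType) (V : finType) (d : V -> V -> R) (T : {set V}) (gamma : R).
Variables (S : {set V}) (F : {set {set V}}).
Hypotheses (d_metric : is_metric d) (gamma_ge1 : 1 <= gamma).
Hypothesis stable : gamma_stable d T gamma S F.

Lemma stable_tree : is_tree S F.
Proof. by case: stable => [[[]]]. Qed.

Lemma stable_terminals : T \subset S.
Proof. by case: stable => [[[]]]. Qed.

Lemma stable_exchange S' F' : steiner_tree T S' F' -> F' != F ->
  gamma * edges_weight d (F :\: F') < edges_weight d (F' :\: F).
Proof.
case: stable => [[stF minF] uniqF] stF' F'F; rewrite ltNge; apply/negP => le_w.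
(* Inflating by gamma exactly the edges that F' drops makes F' at least as cheap as F. *)
pose w' u v := if [set u; v] \in F :\: F' then gamma * d u v else d u v.
have w'_range u v : d u v <= w' u v <= gamma * d u v.
  have le_gd := ler_peMl (dist_ge0 d_metric u v) gamma_ge1.
  by rewrite /w'; case: ifP; rewrite lexx ?le_gd.
have edge_w' e : edge_weight w' e =
    (if e \in F :\: F' then gamma * edge_weight d e else edge_weight d e).
  rewrite /edge_weight (eq_bigr (fun p => if e \in F :\: F' then gamma * d p.1 p.2
    else d p.1 p.2)) => [|p /eqP Ep]; last by rewrite /w' Ep.
  by case: ifP => _ //; rewrite -mulr_sumr mulrA.
have w'F : tree_weight w' F = edges_weight d (F :&: F') + gamma * edges_weight d (F :\: F').
  rewrite tree_weightE /edges_weight (big_setID F') /= mulr_sumr.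
  congr (_ + _); apply: eq_bigr => e; rewrite edge_w'; last by move=> ->.
  by case/setIP=> _ eF'; rewrite in_setD eF'.
have w'F' : tree_weight w' F' = edges_weight d (F :&: F') + edges_weight d (F' :\: F).
  rewrite tree_weightE /edges_weight (big_setID F) /= (setIC F').
  congr (_ + _); apply: eq_bigr => e; rewrite edge_w' !in_setD; first by case/setIP=> _ ->.
  by case/andP=> /negbTE ->; rewrite andbF.
have [[S0 F0] st0 min0] := exists_minimizer (fun p => tree_weight w' p.2)
  (stF : (fun p => steiner_tree T p.1 p.2) (S, F)).
have [_ F0F] : S0 = S /\ F0 = F.
  by apply: (uniqF w' w'_range); split => // S1 F1 st1; apply: (min0 (S1, F1)).
have [_ F'_eq] : S' = S /\ F' = F.
  apply: (uniqF w' w'_range); split => // S1 F1 st1; apply: le_trans (min0 (S1, F1) st1).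
  by rewrite /= F0F w'F w'F' lerD2l.
by rewrite F'_eq eqxx in F'F.
Qed.

Lemma stable_edge_swap x y p q :
  [set x; y] \in F -> [set p; q] \notin F -> p \in S -> q \in S -> p != q ->
  connect (edge_rel ([set p; q] |: (F :\ [set x; y]))) x y ->
  gamma * d x y < d p q.
Proof.
move=> xyF pqF pS qS pq cxy.
have [xy _ _] := tree_edge_ends stable_tree xyF.
set F' := [set p; q] |: (F :\ [set x; y]).
have F'F : F' != F by apply: contraNneq pqF => <-; rewrite setU11.
have := stable_exchange (conj (tree_exchange stable_tree xyF pqF pS qS pq cxy)
  stable_terminals) F'F.
have -> : F :\: F' = [set [set x; y]].
  apply/setP => e; rewrite /F' !inE.
  have [-> | exy] /= := eqVneq e [set x; y]; last by case: (e \in F); rewrite ?orbT ?andbF.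
  by rewrite xyF andbT orbF; apply: contraNneq pqF => <-.
have -> : F' :\: F = [set [set p; q]].
  apply/setP => e; rewrite /F' !inE; case: eqVneq => [-> | _]; first by rewrite (negbTE pqF).
  by case: (e \in F); rewrite ?andbF.
by rewrite !edges_weight1 !edge_weight_dist.
Qed.

Lemma stable_steiner_degree_ne2 s t t' :
  [set s; t] \in F -> [set s; t'] \in F -> t != t' -> s \notin T ->
  ~ (forall z, [set s; z] \in F -> z = t \/ z = t').
Proof.
move=> stF st'F tt' sT nbs.
have [st _ _] := tree_edge_ends stable_tree stF.
have [st' _ _] := tree_edge_ends stable_tree st'F.
have tt'F := tree_triangle_free stable_tree stF st'F tt'.
set F' := [set t; t'] |: (F :\ [set s; t] :\ [set s; t']).
have steiner' : steiner_tree T (S :\ s) F'.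
  split; first exact: tree_splice stable_tree stF st'F tt' nbs.
  apply/subsetP => x xT; rewrite in_setD1 (subsetP stable_terminals) // andbT.
  by apply: contraNneq sT => <-.
have F'F : F' != F by apply: contraNneq tt'F => <-; rewrite setU11.
have := stable_exchange steiner' F'F.
have stt' : [set s; t] != [set s; t'] by apply: contra_neq tt' => /set2_injr.
have -> : F :\: F' = [set [set s; t]; [set s; t']].
  apply/setP => e; rewrite /F' !inE andbC; case eF: (e \in F) => /=.
    have -> /= : (e == [set t; t']) = false by apply: contraNF tt'F => /eqP <-.
    by rewrite andbT negb_and !negbK orbC.
  by apply/esym/norP; split; apply: contraFneq eF => ->.
have -> : F' :\: F = [set [set t; t']].
  apply/setP => e; rewrite /F' !inE; case: eqVneq => [-> | _]; first by rewrite (negbTE tt'F).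
  by case: (e \in F); rewrite ?andbF.
rewrite edges_weight2 // edges_weight1 !edge_weight_dist //.
have := ler_peMl (addr_ge0 (dist_ge0 d_metric s t) (dist_ge0 d_metric s t')) gamma_ge1.
have := dist_triangle d_metric t s t'; rewrite (distC d_metric t s).
lra.
Qed.

Lemma stable_steiner_third_neighbour s t t' :
  [set s; t] \in F -> [set s; t'] \in F -> t != t' -> s \notin T ->
  exists z, [/\ [set s; z] \in F, z != t & z != t'].
Proof.
move=> stF st'F tt' sT.
have [/existsP [z /and3P [szF zt zt']] | no_z] :=
  boolP [exists z, [&& [set s; z] \in F, z != t & z != t']]; first by exists z.
case: (stable_steiner_degree_ne2 stF st'F tt' sT) => z szF.
have [-> | zt] := eqVneq z t; first by left.
have [-> | zt'] := eqVneq z t'; first by right.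
by move: no_z; rewrite negb_exists => /forallP /(_ z); rewrite szF zt zt'.
Qed.

End Stability.

(* 1.755 exceeds both the golden ratio, root of g (g - 1) = 1, and 1 + 1/sqrt 2, the larger
   root of 2 g (g - 1) = 2 g - 1. *)
Lemma golden_lt (R : realFieldType) (g : R) : 1755%:R / 1000%:R < g -> 1 < g * (g - 1).
Proof. by move=> ?; nra. Qed.

Lemma gamma_triple_lt (R : realFieldType) (g : R) :
  1755%:R / 1000%:R < g -> 2%:R * g - 1 < 2%:R * g * (g - 1).
Proof. by move=> ?; nra. Qed.

Lemma light_triple_contra (R : realFieldType) (g A x y z : R) :
  1755%:R / 1000%:R < g -> 0 < A ->
  g * x < A -> g * y < A -> g * z < x + z -> 2%:R * A <= x + y + z -> False.
Proof.
move=> gg A0 hx hy hz hs; have := gamma_triple_lt gg.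
have g1 : 0 < g - 1 by lra.
have hz' : g * ((g - 1) * z) < g * x by rewrite ltr_pM2l; lra.
have hxy : (g - 1) * (g * x + g * y) < (g - 1) * (2%:R * A) by rewrite ltr_pM2l; lra.
have hs' : g * (g - 1) * (2%:R * A) <= g * (g - 1) * (x + y + z) by rewrite ler_pM2l; nra.
nra.
Qed.

Section FanInTree.

Variables (R : realFieldType) (V : finType) (d : V -> V -> R) (T : {set V}) (gamma : R).
Variables (S : {set V}) (F : {set {set V}}) (SH : {set V}) (FH : {set {set V}}).
Variables (a : V) (m : nat) (b : 'I_m -> V).
Hypotheses (d_metric : is_metric d) (gamma_gt : 1755%:R / 1000%:R < gamma).
Hypothesis stable : gamma_stable d T gamma S F.
Hypothesis steiner_independent : forall u v, [set u; v] \in F -> u \in T \/ v \in T.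
Hypothesis subH : is_subgraph SH FH S F.
Hypothesis fan : tc_fan T SH FH a b.
Hypothesis cross_heavy : forall u v, u != v -> [set u; v] \notin FH ->
  in_terminal_comp T SH u -> in_terminal_comp T SH v -> ~~ same_terminal_comp FH u v ->
  avg_weight d a b < d u v.
Hypothesis avg_min : forall (a' : V) (m' : nat) (b' : 'I_m' -> V),
  tc_fan T SH FH a' b' -> avg_weight d a b <= avg_weight d a' b'.
Hypothesis balanced : forall i j, d a (b i) <= (gamma - 1)^-1 * d a (b j).

Local Notation A := (avg_weight d a b).
Local Notation Sigma := (\sum_(k < m) d a (b k)).

Lemma gamma_gt1 : 1 < gamma.
Proof. by have := gamma_gt; lra. Qed.

Lemma fan_size : (2 <= m)%N. Proof. by case: fan. Qed.

Lemma apex_steiner : a \notin T. Proof. by case: fan. Qed.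

Lemma fan_apex_neq i : b i != a. Proof. by case: fan. Qed.

Lemma fan_terminal_comp i : b i \in T \/ in_nontrivial_comp SH FH (b i).
Proof. by case: fan. Qed.

Lemma fan_separated i j : i != j -> ~~ connect (edge_rel FH) (b i) (b j).
Proof. by case: fan => _ _ _ _; apply. Qed.

Lemma fan_in_tree_vertices i : b i \in S.
Proof.
have [/subsetP SHS _ _] := subH.
by case: (fan_terminal_comp i) => [/(subsetP (stable_terminals stable)) | [/SHS]].
Qed.

Lemma fan_pred_size_gt0 : 0 < (m.-1)%:R :> R.
Proof. by rewrite ltr0n -subn1 subn_gt0 (leq_trans _ fan_size). Qed.

Lemma fan_replace_le j u : u \in T -> u != a -> connect (edge_rel FH) u (b j) ->
  d a (b j) <= d a u.
Proof.
move=> uT ua cuj; pose b' (k : 'I_m) := if k == j then u else b k.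
have sep_u l : l != j -> ~~ connect (edge_rel FH) u (b l).
  rewrite eq_sym => /fan_separated; apply: contra => cul.
  by rewrite (connect_trans _ cul) // connect_edgeC.
have fan' : tc_fan T SH FH a b'.
  split; [exact: fan_size | exact: apex_steiner | | |].
  - by move=> k; rewrite /b'; case: ifP => _; [exact: ua | exact: fan_apex_neq].
  - by move=> k; rewrite /b'; case: ifP => _; [left | exact: fan_terminal_comp].
  move=> k l kl; rewrite /b' /same_terminal_comp.
  have [kj | kj] := eqVneq k j; have [lj | lj] := eqVneq l j.
  - by rewrite kj lj eqxx in kl.
  - exact: sep_u.
  - by rewrite connect_edgeC sep_u.
  - exact: fan_separated.
have := avg_min fan'; rewrite /avg_weight ler_pM2r ?invr_gt0 ?fan_pred_size_gt0 //.
rewrite (bigD1 j) //= [X in _ <= X](bigD1 j) //= /b' eqxx.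
rewrite [X in _ <= _ + X](eq_bigr (fun k => d a (b k))) => [|k /negbTE -> //].
by rewrite lerD2r.
Qed.

Lemma fan_extend_le u : u \in T -> u != a ->
  (forall k, ~~ connect (edge_rel FH) u (b k)) -> Sigma <= (m.-1)%:R * d a u.
Proof.
move=> uT ua sep_u.
pose b' (k : 'I_m.+1) := if unlift ord_max k is Some k' then b k' else u.
have b'_lift k : b' (lift ord_max k) = b k by rewrite /b' liftK.
have b'_max : b' ord_max = u by rewrite /b' unlift_none.
have fan' : tc_fan T SH FH a b'.
  split; [exact: leqW fan_size | exact: apex_steiner | | |].
  - by move=> k; case: (unliftP ord_max k) => [k'|] ->; rewrite ?b'_lift ?b'_max ?fan_apex_neq.
  - move=> k; case: (unliftP ord_max k) => [k'|] ->; rewrite ?b'_lift ?b'_max; last by left.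
    exact: fan_terminal_comp.
  move=> k l; case: (unliftP ord_max k) => [k'|] ->; case: (unliftP ord_max l) => [l'|] ->;
    rewrite ?b'_lift ?b'_max /same_terminal_comp ?eqxx //.
  - by rewrite (inj_eq lift_inj); apply: fan_separated.
  - by rewrite connect_edgeC sep_u.
have := avg_min fan'; rewrite /avg_weight big_ord_recr /= b'_max.
have -> : \sum_(k < m) d a (b' (widen_ord (leqnSn m) k)) = Sigma.
  apply: eq_bigr => k _; rewrite -b'_lift; congr (d a (b' _)).
  by apply: val_inj; rewrite /= /bump leqNgt ltn_ord.
have m1 : (m.-1)%:R = m%:R - 1 :> R by rewrite -subn1 natrB // (leq_trans _ fan_size).
have m2 : 2%:R <= m%:R :> R by rewrite ler_nat fan_size.
rewrite ler_pdivrMr ?fan_pred_size_gt0 // mulrAC ler_pdivlMr ?ltr0n ?(leq_trans _ fan_size) //.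
rewrite m1; nra.
Qed.

Lemma fan_balanced i j : (gamma - 1) * d a (b i) <= d a (b j).
Proof.
have g1 : 0 < gamma - 1 by rewrite subr_gt0 gamma_gt1.
by rewrite mulrC -ler_pdivlMr // mulrC; apply: balanced.
Qed.

Lemma terminal_dist_lower i u : u \in T -> u != a -> (gamma - 1) * d a (b i) <= d a u.
Proof.
move=> uT ua.
(* u replaces the leaf of its terminal component, or joins the fan as an extra leaf. *)
have [/existsP [j cuj] | no_j] := boolP [exists j, connect (edge_rel FH) u (b j)].
  exact: le_trans (fan_balanced i j) (fan_replace_le uT ua cuj).
have sep_u k : ~~ connect (edge_rel FH) u (b k).
  by apply: contra no_j => cuk; apply/existsP; exists k.
have le_sum : m%:R * ((gamma - 1) * d a (b i)) <= Sigma.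
  have -> : m%:R * ((gamma - 1) * d a (b i)) = \sum_(k < m) (gamma - 1) * d a (b i).
    by rewrite sumr_const card_ord mulr_natl.
  by apply: ler_sum => k _; exact: fan_balanced.
have := fan_extend_le uT ua sep_u; have := fan_pred_size_gt0.
have : (m.-1)%:R + 1 = m%:R :> R by rewrite natr1 prednK // (leq_trans _ fan_size).
have g1 : 0 <= gamma - 1 by rewrite subr_ge0 ltW // gamma_gt1.
have := mulr_ge0 g1 (dist_ge0 d_metric a (b i)).
nra.
Qed.

Lemma steiner_neighbour_terminal s t : s \notin T -> [set s; t] \in F -> t \in T.
Proof. by move=> sT /steiner_independent [sT'|//]; rewrite sT' in sT. Qed.

Lemma fan_edge_in_tree i : a \in S -> [set a; b i] \in F.
Proof.
move=> aS; apply/negPn/negP => abF; have trF := stable_tree stable.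
have biS := fan_in_tree_vertices i; have bia := fan_apex_neq i.
have [u [auF cbu]] := tree_neighbour_towards trF aS biS bia.
have [au _ _] := tree_edge_ends trF auF.
have uT := steiner_neighbour_terminal apex_steiner auF.
have swap : gamma * d a u < d a (b i).
  apply: (stable_edge_swap d_metric (ltW gamma_gt1) stable auF abF aS biS).
    by rewrite eq_sym.
  apply: (@connect_trans _ _ (b i)); first by apply: connect_edge; rewrite setU11.
  apply: connect_subset cbu; apply/subsetP => e; rewrite inE => /andP [eF ae].
  rewrite in_setU1 in_setD1 eF andbT; apply/orP; right.
  by apply: contraNneq ae => ->; rewrite set21.
have ua : u != a by rewrite eq_sym.
have abi : a != b i by rewrite eq_sym.
have := terminal_dist_lower i uT ua.
have := dist_gt0 d_metric abi; have := golden_lt gamma_gt; have := gamma_gt1.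
nra.
Qed.

Lemma avg_gt0 : 0 < A.
Proof.
rewrite divr_gt0 ?fan_pred_size_gt0 //.
have i0 : 'I_m := Ordinal (leq_trans (isT : (0 < 2)%N) fan_size).
rewrite (bigD1 i0) //=; apply: ltr_wpDr.
  by apply: sumr_ge0 => k _; exact: dist_ge0.
by rewrite dist_gt0 // eq_sym fan_apex_neq.
Qed.

Lemma fan_three_terminals s t t' z :
  s \notin T -> s \notin SH -> t \in T -> t' \in T -> z \in T ->
  [set s; t] \in F -> [set s; t'] \in F -> [set s; z] \in F ->
  t != t' -> t != z -> t' != z ->
  2%:R * A <= d s t + d s t' + d s z.
Proof.
move=> sT sSH tT t'T zT stF st'F szF tt' tz t'z.
have sep := subgraph_separates_neighbours (stable_tree stable) subH sSH.
pose b3 (k : 'I_3) := nth s [:: t; t'; z] k.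
have fan3 : tc_fan T SH FH s b3.
  split => //.
  - by case=> [[|[|[|k]]] Hk] //=; apply: contraNneq sT => <-.
  - by case=> [[|[|[|k]]] Hk] //=; left.
  case=> [[|[|[|k]]] Hk] // [[|[|[|l]]] Hl] //= _; rewrite /same_terminal_comp;
    by apply: sep => //; rewrite eq_sym.
have := avg_min fan3.
rewrite /avg_weight !big_ord_recr big_ord0 /= add0r ler_pdivlMr ?ltr0Sn //.
by rewrite mulrC.
Qed.

Lemma light_steiner_edge_unique s t t' :
  s \notin T -> s \notin SH -> [set s; t] \in F -> [set s; t'] \in F ->
  gamma * d s t < A -> gamma * d s t' < A -> t = t'.
Proof.
move=> sT sSH stF st'F light light'; apply/eqP/negPn/negP => tt'.
have trF := stable_tree stable; have g1 := ltW gamma_gt1.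
have [z [szF zt zt']] := stable_steiner_third_neighbour d_metric g1 stable stF st'F tt' sT.
have [_ _ tS] := tree_edge_ends trF stF; have [_ _ zS] := tree_edge_ends trF szF.
have tz : t != z by rewrite eq_sym.
have stsz : [set s; t] != [set s; z] by apply: contra_neq tz => /set2_injr.
have tzF := tree_triangle_free trF stF szF tz.
have swap : gamma * d s z < d t z.
  apply: (stable_edge_swap d_metric g1 stable szF tzF tS zS tz).
  apply: (@connect_trans _ _ t); apply: connect_edge; last by rewrite setU11.
  by rewrite in_setU1 in_setD1 stsz stF orbT.
have := dist_triangle d_metric t s z; rewrite (distC d_metric t s) => tri.
apply: (light_triple_contra gamma_gt avg_gt0 light light' (lt_le_trans swap tri)).
have t'z : t' != z by rewrite eq_sym.
have term := steiner_neighbour_terminal sT.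
exact: fan_three_terminals sT sSH (term _ stF) (term _ st'F) (term _ szF) stF st'F szF tt' tz t'z.
Qed.

Lemma light_edge_steiner_end e :
  e \in F -> e \notin FH -> gamma * edge_weight d e < A ->
  exists s t, [/\ e = [set s; t], s \notin T & s \notin SH].
Proof.
move=> eF eFH light; have trF := stable_tree stable; have [_ edgF _ _] := trF.
have [x [y [xy _ _ Ee]]] := edgF e eF.
have [|/norP [xSH xT]] := boolP ((x \in SH) || (x \in T)); last by exists x, y.
have [|/norP [ySH yT]] := boolP ((y \in SH) || (y \in T)); last first.
  by exists y, x; rewrite Ee setUC.
move=> /orP ytc /orP xtc; exfalso.
have xyF : [set x; y] \in F by rewrite -Ee.
have sep : ~~ same_terminal_comp FH x y.
  apply: contra (tree_bridge trF xyF) => /connect_subset; apply; apply/subsetP => f fFH.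
  have [_ /subsetP FHF _] := subH.
  by rewrite in_setD1 FHF // andbT; apply: contraNneq eFH => fxy; rewrite Ee -fxy.
have xyFH : [set x; y] \notin FH by rewrite -Ee.
have := cross_heavy xy xyFH xtc ytc sep; move: light; rewrite Ee edge_weight_dist //.
have := ler_peMl (dist_ge0 d_metric x y) (ltW gamma_gt1).
lra.
Qed.

Local Notation light_edges :=
  [set e in F | (e \notin FH) && (gamma * edge_weight d e < A)].

Lemma light_edges_separate i j : i != j ->
  ~~ connect (edge_rel (FH :|: light_edges)) (b i) (b j).
Proof.
move=> ij; apply: contra (fan_separated ij) => /connect_pendant_edges; apply.
have trF := stable_tree stable; have [_ /subsetP FHF FH_SH] := subH.
move=> e /setIdP [eF /andP [eFH light]].
have [s [t [Est sT sSH]]] := light_edge_steiner_end eF eFH light.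
have s_fan k : s != b k.
  by apply/eqP => sk; case: (fan_terminal_comp k) => [|[]]; rewrite -sk ?(negbTE sT) ?(negbTE sSH).
exists s, t; split => // e' /setUP [e'FH | /setIdP [e'F /andP [_ light']]] se'.
  have [z Ee'] := tree_edge_at trF (FHF _ e'FH) se'.
  by rewrite Ee' in e'FH; case: (FH_SH _ _ e'FH) => sSH'; rewrite sSH' in sSH.
have [t' Ee'] := tree_edge_at trF e'F se'.
have stF : [set s; t] \in F by rewrite -Est.
have st'F : [set s; t'] \in F by rewrite -Ee'.
have [st _ _] := tree_edge_ends trF stF; have [st' _ _] := tree_edge_ends trF st'F.
rewrite Ee' Est (light_steiner_edge_unique sT sSH st'F stF) //.
  by rewrite -(edge_weight_dist d_metric st') -Ee'.
by rewrite -(edge_weight_dist d_metric st) -Est.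
Qed.

Lemma fan_inj : injective b.
Proof.
move=> i j bij; apply/eqP; apply: contraTT (connect0 (edge_rel FH) (b i)) => ij.
by rewrite {2}bij fan_separated.
Qed.

Local Notation leaves := [set b i | i : 'I_m].
Local Notation fan_edges := [set [set a; x] | x in leaves].

Lemma card_leaves : #|leaves| = m.
Proof. by rewrite card_imset ?card_ord //; exact: fan_inj. Qed.

Lemma fan_edges_weight : edges_weight d fan_edges = Sigma.
Proof.
rewrite /edges_weight big_imset /=; last by move=> x y _ _ /set2_injr.
rewrite big_imset /=; last by move=> i j _ _; apply: fan_inj.
by apply: eq_bigr => i _; rewrite edge_weight_dist // eq_sym fan_apex_neq.
Qed.

Lemma heavy_reattachment : a \notin S ->
  exists2 K : {set {set V}}, K \subset F &
    [/\ #|F :\: K| = m.-1, {in F :\: K, forall e, A <= gamma * edge_weight d e}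
      & is_tree (a |: S) (K :|: fan_edges)].
Proof.
move=> aS; have trF := stable_tree stable; have [_ /subsetP FHF _] := subH.
have leavesS : leaves \subset S.
  by apply/subsetP => _ /imsetP [i _ ->]; exact: fan_in_tree_vertices.
have leaves0 : leaves != set0 by rewrite -card_gt0 card_leaves (leq_trans _ fan_size).
have K0F : FH :|: light_edges \subset F.
  by apply/subsetP => e /setUP [/FHF | /setIdP []].
have sepK0 : {in leaves &, forall x y, x != y ->
    ~~ connect (edge_rel (FH :|: light_edges)) x y}.
  move=> _ _ /imsetP [i _ ->] /imsetP [j _ ->] bij.
  by apply: light_edges_separate; apply: contra_neq bij => ->.
have [K [K0K KF sepK reachK]] := separating_forest trF K0F leavesS leaves0 sepK0.
have [cardFK trK] := tree_reattach trF aS KF leavesS sepK reachK.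
exists K => //; split => //; first by rewrite -card_leaves -cardFK.
move=> e /setDP [eF eK]; rewrite leNgt; apply: contra eK => light.
by apply: (subsetP K0K); rewrite !inE eF light andbT /= orbN.
Qed.

Lemma apex_in_tree : a \in S.
Proof.
apply/negPn/negP => aS; have trF := stable_tree stable.
have [K KF [cardFK heavy trK]] := heavy_reattachment aS.
have fan_out e : e \in fan_edges -> e \notin F.
  case/imsetP => x _ ->; apply/negP => /(tree_edge_ends trF) [_ aS' _].
  by rewrite aS' in aS.
have F'F : K :|: fan_edges != F.
  have i0 : 'I_m := Ordinal (leq_trans (isT : (0 < 2)%N) fan_size).
  have e0 : [set a; b i0] \in fan_edges by apply/imsetP; exists (b i0); rewrite ?imset_f.
  by apply: contraNneq (fan_out _ e0) => <-; rewrite inE e0 orbT.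
have := stable_exchange d_metric (ltW gamma_gt1) stable
  (conj trK (subset_trans (stable_terminals stable) (subsetU1 a S))) F'F.
have -> : F :\: (K :|: fan_edges) = F :\: K.
  apply/setP => e; rewrite !inE negb_or; case eF: (e \in F); rewrite ?andbF //= !andbT.
  by have := fan_out e; rewrite eF; case: (e \in fan_edges) => [/(_ isT) | _]; rewrite ?andbT.
have -> : (K :|: fan_edges) :\: F = fan_edges.
  apply/setP => e; rewrite !inE; case efan: (e \in fan_edges); first by rewrite fan_out ?orbT.
  by rewrite orbF andbC; case eK: (e \in K); rewrite //= (subsetP KF _ eK).
have w_rest : A * (m.-1)%:R <= gamma * edges_weight d (F :\: K).
  rewrite -cardFK mulr_natr -sumr_const /edges_weight mulr_sumr.
  by apply: ler_sum => e /heavy.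
have avgE : A * (m.-1)%:R = Sigma by rewrite divfK // lt0r_neq0 // fan_pred_size_gt0.
rewrite fan_edges_weight; lra.
Qed.

End FanInTree.

Unset Implicit Arguments.

Theorem mainTheorem9 (R : realFieldType) (V : finType) (d : V -> V -> R)
  (T : {set V}) (gamma : R) (Sopt : {set V}) (Fopt : {set {set V}})
  (SH : {set V}) (FH : {set {set V}}) (a : V) (m : nat) (b : 'I_m -> V) :
  is_metric d ->
  1755%:R / 1000%:R < gamma ->
  gamma_stable d T gamma Sopt Fopt ->
  (forall u v, [set u; v] \in Fopt -> u \in T \/ v \in T) ->
  is_subgraph SH FH Sopt Fopt ->
  tc_fan T SH FH a b ->
  (forall u v, u != v -> [set u; v] \notin FH ->
     in_terminal_comp T SH u -> in_terminal_comp T SH v ->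
     ~~ same_terminal_comp FH u v ->
     avg_weight d a b < d u v) ->
  (forall (a' : V) (m' : nat) (b' : 'I_m' -> V),
     tc_fan T SH FH a' b' -> avg_weight d a b <= avg_weight d a' b') ->
  (forall i j, d a (b i) <= (gamma - 1)^-1 * d a (b j)) ->
  forall i, [set a; b i] \in Fopt.
Proof.
move=> d_metric gamma_gt stable indep subH fan cross_heavy avg_min balanced i.
apply: (fan_edge_in_tree d_metric gamma_gt stable indep subH fan avg_min balanced).
exact: (apex_in_tree d_metric gamma_gt stable indep subH fan cross_heavy avg_min).
Qed.
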